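(* Let $q$ be a prime power and let $n_1,n_2$ be coprime odd positive integers, each coprime to $q$. If every irreducible monic factor of $x^{n_1}-1$ in $\mathbb{F}_{q^2}[x]$ is SCRIM and $x-1$ is the only SCRIM factor of $x^{n_2}-1$ in $\mathbb{F}_{q^2}[x]$, then $|\Omega_{q^2,n_1n_2}|=|\Omega_{q^2,n_1}|$.
   Context: $\mathbb{F}_{q^2}$ is the finite field with $q^2$ elements. For $\alpha\in\mathbb{F}_{q^2}$ put $\bar\alpha=\alpha^q$, and for $f(x)=\sum_i f_ix^i$ put $\overline{f(x)}=\sum_i \bar f_i x^i$. For $f(x)$ with $f(0)\neq 0$, $f^*(x)=x^{\deg f}f(0)^{-1}f(1/x)$ and $f^\dagger(x)=\overline{f^*(x)}$. A polynomial is SCRIM if it is monic, irreducible over $\mathbb{F}_{q^2}$, has nonzero constant term, and satisfies $f=f^\dagger$. $\Omega_{q^2,n}$ denotes the set of SCRIM polynomials in $\mathbb{F}_{q^2}[x]$ dividing $x^n-1$. *)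

From HB Require Import structures.
From mathcomp Require Import all_boot all_order all_algebra.
From mathcomp Require Import boolp.
Set Implicit Arguments. Unset Strict Implicit. Unset Printing Implicit Defensive.
Import GRing.Theory.
Local Open Scope ring_scope.

Section Scrim.
Variables (F : finFieldType) (q : nat).

Definition conjq (a : F) : F := a ^+ q.
Definition conj_poly (f : {poly F}) : {poly F} := map_poly conjq f.

(* f^*(x) = x^{deg f} f(0)^{-1} f(1/x): the coefficient of x^i is
   f(0)^{-1} * f_{deg f - i} *)
Definition recip (f : {poly F}) : {poly F} :=
  (f`_0)^-1 *: \poly_(i < size f) f`_((size f).-1 - i).

Definition dagger (f : {poly F}) : {poly F} := conj_poly (recip f).

Definition SCRIM (f : {poly F}) : Prop :=
  [/\ f \is monic, irreducible_poly f, f`_0 != 0 & f = dagger f].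

(* Omega_{q^2,n}: SCRIM polynomials dividing x^n - 1.  For n >= 1 every
   divisor of x^n - 1 has size <= n+1, so they all live in {poly_(n.+1) F}. *)
Definition Omega (n : nat) : {set {poly_(n.+1) F}} :=
  [set p : {poly_(n.+1) F} | `[< SCRIM (p : {poly F}) >] && ((p : {poly F}) %| 'X^n - 1)].

End Scrim.

From HB Require Import structures.
From mathcomp Require Import all_boot all_order all_algebra all_field fraction.
From mathcomp Require Import boolp zify.
Set Implicit Arguments.
Unset Strict Implicit.
Unset Printing Implicit Defensive.
Import GRing.Theory.
Local Open Scope ring_scope.

(* A SCRIM divisor f of x^(n1 n2) - 1 already divides x^n1 - 1.  Choose k
   with k = 0 mod n1 and k = 1 mod n2.  Then f divides (x^n2 - 1)(x^k), hence
   g(x^k) for a monic irreducible factor g of x^n2 - 1.  The dagger operation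
   commutes with x |-> x^k, so f = f^dagger also divides g^dagger(x^k); were g
   and g^dagger coprime, so would be their compositions with x^k.  Hence g
   divides g^dagger, which is monic of the same degree, so g is SCRIM and thus
   g = x - 1.  Therefore f divides x^k - 1, and with x^(n1 n2) - 1 this gives
   x^n1 - 1. *)

Lemma coef0_comp_Xn (R : nzSemiRingType) (p : {poly R}) k :
  (0 < k)%N -> (p \Po 'X^k)`_0 = p`_0.
Proof. by move=> k0; rewrite coef_comp_poly_Xn // dvdn0 div0n. Qed.

Section Reversal.
Variable F : fieldType.
Implicit Types g h : {poly F}.

Definition revp h : {poly F} :=
  \poly_(i < size h) h`_((size h).-1 - i).

Lemma horner_map_revp (K : fieldType) (phi : {rmorphism F -> K}) h (y : K) :
  y != 0 ->
  (map_poly phi (revp h)).[y] = y ^+ (size h).-1 * (map_poly phi h).[y^-1].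
Proof.
move=> y0; rewrite (@horner_coef_wide _ (size h)); last first.
  by rewrite size_map_poly size_poly.
rewrite (@horner_coef_wide _ (size h)) ?size_map_poly //.
rewrite mulr_sumr (reindex_inj rev_ord_inj) /=; apply: eq_bigr => i _.
have [rev_i lt_rev_i Nsize] : [/\ (size h).-1 - (size h - i.+1) = i,
    size h - i.+1 < size h & (size h).-1 = (size h - i.+1) + i]%N.
  by case: i => j /= lt_j; split; lia.
rewrite !coef_map coef_poly /= lt_rev_i rev_i {1}Nsize.
by rewrite mulrCA exprD exprVn mulfK // expf_neq0.
Qed.

Lemma size_revp h : h`_0 != 0 -> size (revp h) = size h.
Proof. by move=> h0; rewrite size_poly_eq // subnn. Qed.

Lemma lead_coef_revp h : h`_0 != 0 -> lead_coef (revp h) = h`_0.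
Proof.
move=> h0; have sh : (0 < size h)%N.
  by rewrite size_poly_gt0; apply: contraNneq h0 => ->; rewrite coef0.
by rewrite lead_coef_poly // subnn.
Qed.

(* Identities between polynomials over a possibly finite field are checked by
   evaluation at the generic point X of the fraction field of {poly F}. *)
Let K := {fraction {poly F}}.
Let iota : {rmorphism F -> K} := (@tofrac {poly F}) \o (@polyC F).
Let y : K := tofrac 'X.

Let y_neq0 : y != 0.
Proof. by rewrite tofrac_eq0 polyX_eq0. Qed.

Let tofracE h : tofrac h = (map_poly iota h).[y].
Proof.
rewrite map_poly_comp horner_map /=.
by have := comp_polyXr h; rewrite /comp_poly => ->.
Qed.

Let horner_map_comp_Xn h k (z : K) :
  (map_poly iota (h \Po 'X^k)).[z] = (map_poly iota h).[z ^+ k].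
Proof. by rewrite map_comp_poly map_polyXn horner_comp hornerXn. Qed.

Let tofrac_inj : injective (@tofrac {poly F}).
Proof. by move=> a b /eqP; rewrite tofrac_eq => /eqP. Qed.

Lemma revpM g h : g != 0 -> h != 0 -> revp (g * h) = revp g * revp h.
Proof.
move=> g0 h0; apply: tofrac_inj; rewrite tofracM !tofracE.
rewrite !horner_map_revp // rmorphM hornerM size_mul //.
have sg : (0 < size g)%N by rewrite size_poly_gt0.
have sh : (0 < size h)%N by rewrite size_poly_gt0.
have -> : ((size g + size h).-1.-1 = (size g).-1 + (size h).-1)%N by lia.
by rewrite exprD mulrACA.
Qed.

Lemma revp_comp_Xn g k : (0 < k)%N -> g != 0 ->
  revp (g \Po 'X^k) = revp g \Po 'X^k.
Proof.
move=> k0 g0; apply: tofrac_inj; rewrite !tofracE horner_map_revp //.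
rewrite !horner_map_comp_Xn horner_map_revp ?expf_neq0 //.
by rewrite size_comp_poly size_polyXn /= exprVn -exprM mulnC.
Qed.

End Reversal.

Section IrreducibleFactors.
Variable F : fieldType.
Implicit Types f g h r : {poly F}.

Lemma irredp_dvdp_mul f g h : irreducible_poly f ->
  (f %| g * h) = (f %| g) || (f %| h).
Proof.
move=> irr_f; apply/idP/orP => [fgh|[fg|fh]]; last first.
- exact: dvdp_mull.
- exact: dvdp_mulr.
have [fg|/negbTE nfg] := boolP (f %| g); first by left.
right; rewrite -(Gauss_dvdpr _ (_ : coprimep f g)) //.
by rewrite irreducible_poly_coprime // nfg.
Qed.

Lemma irredp_scale (c : F) f :
  c != 0 -> irreducible_poly f -> irreducible_poly (c *: f).
Proof.
move=> c0 [sf irr_f]; split=> [|d sd]; first by rewrite size_scale.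
rewrite dvdpZr // => /(irr_f _ sd) /eqp_trans; apply.
by rewrite eqp_sym eqp_scale.
Qed.

Lemma irredp_factor_comp f g r : irreducible_poly f -> g != 0 -> f %| g \Po r ->
  exists h, [/\ irreducible_poly h, h %| g & f %| h \Po r].
Proof.
move=> irr_f; have [n] := ubnP (size g); elim: n g => // n IH g.
rewrite ltnS => sg g0 fg; have [irr_g|red_g] := pselect (irreducible_poly g).
  by exists g.
have sg1 : (1 < size g)%N.
  rewrite ltnNge; apply/negP => sg1; have gC := size1_polyC sg1.
  move: fg; rewrite gC comp_polyC -gC => /(dvdp_leq g0) /leq_trans /(_ sg1).
  by rewrite leqNgt irr_f.1.
have [d [sd dg nd]] :
    exists d : {poly F}, [/\ size d != 1%N, d %| g & ~~ (d %= g)].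
  apply: contrapT => nod; apply: red_g; split=> // d sd dg.
  by apply: contrapT => /negP nd; apply: nod; exists d.
have [e ge] : exists e : {poly F}, g = e * d by apply/dvdpP.
have d0 : d != 0 by apply: contraNneq g0 => d0; rewrite ge d0 mulr0.
have e0 : e != 0 by apply: contraNneq g0 => e0; rewrite ge e0 mul0r.
have sd1 : (1 < size d)%N by move: sd; rewrite -size_poly_gt0 in d0; lia.
have sdg : (size d < n)%N.
  apply: leq_trans sg; rewrite ltn_neqAle dvdp_leq // andbT (dvdp_size_eqp dg).
  exact: nd.
have seg : (size e < n)%N.
  apply: leq_trans sg; rewrite ge size_mul //.
  (* [set] merges occurrences of [size e] that differ only in their implicit
     structure instances, which [lia] would treat as distinct atoms. *)
  by move: sd1; set a := size e; set b := size d; lia.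
move: fg; rewrite ge comp_polyM irredp_dvdp_mul // => /orP [fe|fd].
  have [h [irr_h he fh]] := IH e seg e0 fe.
  by exists h; split=> //; apply: dvdp_mulr.
have [h [irr_h hd fh]] := IH d sdg d0 fd.
by exists h; split=> //; apply: dvdp_mull.
Qed.

Lemma monic_irredp_factor_comp f g r : irreducible_poly f -> g != 0 ->
  f %| g \Po r ->
  exists h, [/\ h \is monic, irreducible_poly h, h %| g & f %| h \Po r].
Proof.
move=> irr_f g0 fg; have [h [irr_h hg fh]] := irredp_factor_comp irr_f g0 fg.
have lh0 : (lead_coef h)^-1 != 0 by rewrite invr_eq0 lead_coef_eq0 irredp_neq0.
exists ((lead_coef h)^-1 *: h); split.
- by rewrite monicE lead_coefZ mulVf // lead_coef_eq0 irredp_neq0.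
- exact: irredp_scale.
- by rewrite dvdpZl.
- by rewrite comp_polyZ dvdpZr.
Qed.

Lemma dvdp_Xn_sub1_mul m a : ('X^m - 1 : {poly F}) %| 'X^(m * a) - 1.
Proof.
have Xa : ('X - 1 : {poly F}) %| 'X^a - 1.
  by rewrite -polyC1 dvdp_XsubCl /root !hornerE expr1n subrr.
have := dvdp_comp_poly 'X^m Xa.
by rewrite !comp_polyB comp_Xn_poly comp_polyX comp_polyC polyC1 -exprM.
Qed.

Lemma dvdp_Xn_sub1_add f m n : f %| 'X^n - 1 ->
  (f %| 'X^(m + n) - 1) = (f %| 'X^m - 1).
Proof.
move=> fn; have -> : 'X^(m + n) - 1 = 'X^m * ('X^n - 1) + ('X^m - 1 : {poly F}).
  by rewrite exprD mulrBr mulr1 addrA subrK.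
by rewrite dvdp_addr // dvdp_mull.
Qed.

Lemma dvdp_Xn_sub1_coef0 f n : (0 < n)%N -> f %| 'X^n - 1 -> f`_0 != 0.
Proof.
move=> n0 fX; have : ~~ root ('X^n - 1 : {poly F}) 0.
  by rewrite rootE !hornerE expr0n gtn_eqF // sub0r oppr_eq0 oner_eq0.
by apply: contra => f0; apply: root_dvdp fX _; rewrite rootE horner_coef0.
Qed.

End IrreducibleFactors.

Section Dagger.
Variables (F : finFieldType) (q : nat).
Hypothesis q_pchar : [pchar F].-nat q.
Implicit Types f g h : {poly F}.

Lemma conjq_is_zmod_morphism : zmod_morphism (@conjq F q).
Proof.
by move=> a b; apply/eqP; rewrite /conjq eq_sym subr_eq -exprDn_pchar // subrK.
Qed.

Lemma conjq_is_monoid_morphism : monoid_morphism (@conjq F q).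
Proof. by split=> [|a b]; rewrite /conjq ?expr1n ?exprMn. Qed.

HB.instance Definition _ :=
  GRing.isZmodMorphism.Build F F (@conjq F q) conjq_is_zmod_morphism.
HB.instance Definition _ :=
  GRing.isMonoidMorphism.Build F F (@conjq F q) conjq_is_monoid_morphism.

Lemma daggerE h : dagger q h = map_poly (@conjq F q) ((h`_0)^-1 *: revp h).
Proof. by []. Qed.

Lemma daggerM g h :
  g != 0 -> h != 0 -> dagger q (g * h) = dagger q g * dagger q h.
Proof.
move=> g0 h0; rewrite !daggerE -rmorphM revpM // coef0M invfM.
by rewrite -!mul_polyC polyCM mulrACA.
Qed.

Lemma dagger_comp_Xn g k : (0 < k)%N -> g != 0 ->
  dagger q (g \Po 'X^k) = dagger q g \Po 'X^k.
Proof.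
move=> k0 g0; rewrite !daggerE revp_comp_Xn // coef0_comp_Xn //.
by rewrite -comp_polyZ map_comp_poly map_polyXn.
Qed.

Lemma dagger_dvdp g h : h != 0 -> g %| h -> dagger q g %| dagger q h.
Proof.
move=> h0 /dvdpP [e he]; rewrite he in h0 *.
have /norP [e0 g0] : ~~ ((e == 0) || (g == 0)) by rewrite -mulf_eq0.
by rewrite daggerM // dvdp_mull.
Qed.

Lemma dagger_monic h : h`_0 != 0 -> dagger q h \is monic.
Proof.
move=> h0; rewrite daggerE monic_map // monicE lead_coefZ lead_coef_revp //.
by rewrite mulVf.
Qed.

Lemma size_dagger h : h`_0 != 0 -> size (dagger q h) = size h.
Proof.
by move=> h0; rewrite daggerE size_map_poly size_scale ?invr_eq0 ?size_revp.
Qed.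

Lemma dagger_eq_of_dvdp_comp_Xn f g k : (0 < k)%N ->
  irreducible_poly f -> f = dagger q f ->
  g \is monic -> irreducible_poly g -> g`_0 != 0 ->
  f %| g \Po 'X^k -> dagger q g = g.
Proof.
move=> k0 irr_f fE mg irr_g g0 fg.
have gk0 : g \Po 'X^k != 0.
  by apply: contraNneq g0 => gk0; rewrite -(coef0_comp_Xn _ k0) gk0 coef0.
have fdg : f %| dagger q g \Po 'X^k.
  by rewrite -dagger_comp_Xn ?irredp_neq0 // fE dagger_dvdp.
have g_dvd_dg : g %| dagger q g.
  rewrite -[_ %| _]negbK -irreducible_poly_coprime //; apply/negP.
  move=> /(coprimep_comp_poly 'X^k) /coprimepP /(_ f fg fdg).
  by rewrite -size_poly_eq1 gtn_eqF // irr_f.1.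
apply/eqP; rewrite -(eqp_monic (dagger_monic g0) mg) eqp_sym.
by rewrite -(dvdp_size_eqp g_dvd_dg) size_dagger.
Qed.

Lemma SCRIM_dvdp_Xn_sub1_mulr f n1 n2 :
  (0 < n1)%N -> (0 < n2)%N -> coprime n1 n2 ->
  (forall g, SCRIM q g -> g %| 'X^n2 - 1 -> g = 'X - 1) ->
  SCRIM q f -> f %| 'X^(n1 * n2) - 1 -> f %| 'X^n1 - 1.
Proof.
move=> n1_gt0 n2_gt0 co_n12 only_X1 [mf irr_f f0 fE] f_dvd.
have [km kn Bezout _] := egcdnP n2 n1_gt0; rewrite (eqP co_n12) in Bezout.
pose k := (km * n1)%N; have k_gt0 : (0 < k)%N by rewrite /k Bezout addn1.
have f_comp : f %| ('X^n2 - 1) \Po 'X^k.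
  rewrite comp_polyB comp_Xn_poly comp_polyC polyC1 -exprM.
  have -> : (k * n2 = n1 * n2 * km)%N by rewrite /k; lia.
  by apply: (dvdp_trans f_dvd); apply: dvdp_Xn_sub1_mul.
have Xn2_neq0 : 'X^n2 - 1 != 0 :> {poly F}.
  by rewrite monic_neq0 // -polyC1 monicXnsubC.
have [g [mg irr_g g_dvd fg]] := monic_irredp_factor_comp irr_f Xn2_neq0 f_comp.
have g0 := dvdp_Xn_sub1_coef0 n2_gt0 g_dvd.
have gX : g = 'X - 1.
  apply: only_X1 => //; split=> //.
  by rewrite (dagger_eq_of_dvdp_comp_Xn k_gt0 _ fE).
move: fg; rewrite gX comp_polyB comp_polyX comp_polyC polyC1 => f_Xk.
have : f %| 'X^(n1 + n1 * n2 * kn) - 1.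
  have -> : (n1 + n1 * n2 * kn = k * n1)%N by rewrite /k Bezout; lia.
  by apply: (dvdp_trans f_Xk); apply: dvdp_Xn_sub1_mul.
by rewrite dvdp_Xn_sub1_add // (dvdp_trans f_dvd) ?dvdp_Xn_sub1_mul.
Qed.

End Dagger.

Lemma card_Omega_eq (F : finFieldType) q m n : (0 < m)%N -> (n %| m)%N ->
  (forall f : {poly F}, SCRIM q f -> f %| 'X^m - 1 -> f %| 'X^n - 1) ->
  #|@Omega F q m| = #|@Omega F q n|.
Proof.
move=> m_gt0 n_dvd_m dvd_mn; have n_gt0 := dvdn_gt0 m_gt0 n_dvd_m.
have widenE (p : {poly_(n.+1) F}) : npolyp m.+1 p = p :> {poly F}.
  by rewrite npolypK // (leq_trans (size_npoly p)) // ltnS dvdn_leq.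
have -> : @Omega F q m = [set npolyp m.+1 (val p) | p in @Omega F q n].
  apply/setP => b; rewrite inE; apply/andP/imsetP => [[/asboolP Sb b_dvd]|[a]].
    have b_dvd_n := dvd_mn _ Sb b_dvd.
    have size_b : (size b <= n.+1)%N.
      rewrite -(size_XnsubC (1 : F) n_gt0) dvdp_leq ?polyC1 //.
      by rewrite monic_neq0 // -polyC1 monicXnsubC.
    exists (npolyp n.+1 b).
      by rewrite inE npolypK //; apply/andP; split=> //; exact/asboolP.
    by apply: val_inj; rewrite /= widenE npolypK.
  rewrite inE => /andP [/asboolP Sa a_dvd] ->; rewrite widenE.
  split; first exact/asboolP.
  by rewrite (dvdp_trans a_dvd) // -(divnK n_dvd_m) mulnC dvdp_Xn_sub1_mul.
rewrite card_in_imset // => a b _ _ /(congr1 val).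
by rewrite /= !widenE => /val_inj.
Qed.

Lemma pchar_nat_card (F : finFieldType) p k e : prime p ->
  #|F| = ((p ^ k) ^ e)%N -> [pchar F].-nat (p ^ k)%N.
Proof.
move=> p_prime cardF; rewrite pnatX pnatE //.
by rewrite (@card_finPcharP _ _ (k * e)) // cardF expnM.
Qed.

Theorem theorem2p11 (F : finFieldType) (q : nat)
  (hq : exists p k : nat, [/\ prime p, (0 < k)%N & q = (p ^ k)%N])
  (hF : #|F| = (q ^ 2)%N)
  (n1 n2 : nat)
  (hn1 : (0 < n1)%N) (hn2 : (0 < n2)%N)
  (hodd1 : odd n1) (hodd2 : odd n2)
  (hcop : coprime n1 n2) (hcop1 : coprime n1 q) (hcop2 : coprime n2 q)
  (hall : forall f : {poly F}, f \is monic -> irreducible_poly f ->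
            f %| 'X^n1 - 1 -> @SCRIM F q f)
  (honly : forall f : {poly F}, @SCRIM F q f -> f %| 'X^n2 - 1 -> f = 'X - 1) :
  #|@Omega F q (n1 * n2)| = #|@Omega F q n1|.
Proof.
have [p [k [p_prime _ qE]]] := hq.
have q_pchar : [pchar F].-nat q.
  by rewrite qE; apply: (@pchar_nat_card _ _ _ 2 p_prime); rewrite -qE.
apply: card_Omega_eq; [by rewrite muln_gt0 hn1 hn2 | exact: dvdn_mulr | move=> f].
exact: SCRIM_dvdp_Xn_sub1_mulr q_pchar f n1 n2 hn1 hn2 hcop honly.
Qed.
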